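(* The forcing notion $\mathbb{P}$ defined below satisfies the countable chain condition.
   Context: For $n\in\omega$, $2^n$ is the set of $0$-$1$ sequences of length $n$, with metric $d(\eta,\eta')=2^{-k}$ for $\eta\ne\eta'$, where $k$ is least with $\eta\restriction k\neq\eta'\restriction k$. Let $\mathbb{L}_1(n)$ be the set of all $1$-Lipschitz functions $g\colon 2^n\to 2^n$. For a set $A$, $[A]^2$ denotes the set of $2$-element subsets of $A$, and $[A]^{<\omega}$ the finite subsets; $\rho(\alpha,\beta)$ means $\rho(\{\alpha,\beta\})$. A condition $p\in\mathbb{P}$ is a tuple $p=(n^p,s^p,v^p,\mathcal{F}^p,\gamma^p,\rho^p)$ such that: (1) $n^p\in\omega$, $s^p\in[\omega]^{<\omega}$, $v^p\in[\omega_1]^{<\omega}$; (2) $\mathcal{F}^p=\{f^p_i: i\in s^p\}\subseteq\mathbb{L}_1(n^p)$ and $\rho^p\colon[v^p]^2\to s^p$; (2') $\rho^p(\alpha,\beta)\neq\rho^p(\alpha',\beta)$ whenever $\alpha<\alpha'<\beta$; (3) $\gamma^p\colon v^p\to 2^{n^p}$ is one-to-one; (4) $\gamma^p(\alpha)=f^p_{\rho^p(\alpha,\beta)}(\gamma^p(\beta))$ whenever $\alpha<\beta$ are in $v^p$. The order: $p\le q$ ($q$ is stronger) iff (5) $n^p\le n^q$, $s^p\subseteq s^q$, $v^p\subseteq v^q$; (6) $f^q_i(\eta)\restriction n^p=f^p_i(\eta\restriction n^p)$ for each $i\in s^p$ and every $\eta\in 2^{n^q}$; (7) $\gamma^q(\alpha)\restriction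 n^p=\gamma^p(\alpha)$ for every $\alpha\in v^p$; (8) $\rho^q\restriction[v^p]^2=\rho^p$. *)

From HB Require Import structures.
From mathcomp Require Import all_boot all_order all_algebra.
From mathcomp Require Import boolp classical_sets cardinality.
Set Implicit Arguments. Unset Strict Implicit. Unset Printing Implicit Defensive.
Import Order.TTheory GRing.Theory Num.Theory.
Local Open Scope classical_set_scope.

(* Elements of 2^n are n-tuples of booleans; eta|k is [take k eta]. *)

(* the least k <= n with eta|k <> eta'|k (meaningful when eta <> eta') *)
Definition first_split (n : nat) (eta eta' : n.-tuple bool) : nat :=
  find (fun k => take k eta != take k eta') (iota 0 n.+1).

Definition cdist (n : nat) (eta eta' : n.-tuple bool) : rat :=
  if eta == eta' then 0%R else ((2%:R : rat) ^- (first_split eta eta'))%R.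

Definition lipschitz1 (n : nat) (g : n.-tuple bool -> n.-tuple bool) : Prop :=
  forall eta eta', (cdist (g eta) (g eta') <= cdist eta eta')%R.

(* omega_1 is represented by an abstract type W with a strict well-order lt
   which is uncountable while all its proper initial segments are countable
   (this determines (W, lt) up to isomorphism as omega_1). *)
Definition is_omega1 (W : Type) (lt : W -> W -> Prop) : Prop :=
  [/\ (forall a, ~ lt a a),
      (forall a b c, lt a b -> lt b c -> lt a c),
      (forall a b, [\/ lt a b, a = b | lt b a]) &
      well_founded lt] /\
  ((forall b, countable [set a | lt a b]) /\
      ~ countable [set: W]).

(* raw data of a condition p = (n, s, v, F, gamma, rho); rho(alpha,beta) for
   alpha < beta is stored as rho alpha beta; F = {f i : i in s}. *)
Record cond (W : Type) := Cond {
  cn : nat;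
  cs : set nat;
  cv : set W;
  cf : nat -> cn.-tuple bool -> cn.-tuple bool;
  cgamma : W -> cn.-tuple bool;
  crho : W -> W -> nat }.
Arguments cf [W] c _ _.
Arguments cgamma [W] c _.

Definition in_P (W : Type) (lt : W -> W -> Prop) (p : cond W) : Prop :=
  [/\ finite_set (cs p), finite_set (cv p) &
      (forall i, cs p i -> lipschitz1 (cf p i))] /\
  [/\
      (forall a b, cv p a -> cv p b -> lt a b -> cs p (crho p a b)),
      (forall a a' b, cv p a -> cv p a' -> cv p b -> lt a a' -> lt a' b ->
          crho p a b <> crho p a' b),
      (forall a b, cv p a -> cv p b -> cgamma p a = cgamma p b -> a = b) &
      (forall a b, cv p a -> cv p b -> lt a b ->
          cgamma p a = cf p (crho p a b) (cgamma p b))].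

(* p <= q (q is stronger): clauses (5)-(8) *)
Definition P_le (W : Type) (lt : W -> W -> Prop) (p q : cond W) : Prop :=
  [/\ cn p <= cn q, cs p `<=` cs q & cv p `<=` cv q] /\
  [/\
      (forall i, cs p i -> forall (eta : (cn q).-tuple bool)
          (eta' : (cn p).-tuple bool), val eta' = take (cn p) eta ->
          take (cn p) (cf q i eta) = val (cf p i eta')),
      (forall a, cv p a -> take (cn p) (cgamma q a) = val (cgamma p a)) &
      (forall a b, cv p a -> cv p b -> lt a b -> crho q a b = crho p a b)].

Definition P_compatible (W : Type) (lt : W -> W -> Prop) (p q : cond W) :=
  exists r, in_P lt r /\ P_le lt p r /\ P_le lt q r.

Definition P_antichain (W : Type) (lt : W -> W -> Prop) (A : set (cond W)) :=
  (forall p, A p -> in_P lt p) /\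
  (forall p q, A p -> A q -> p <> q -> ~ P_compatible lt p q).

Definition P_ccc (W : Type) (lt : W -> W -> Prop) :=
  forall A : set (cond W), P_antichain lt A -> countable A.

From mathcomp Require Import all_boot all_order all_algebra.
From mathcomp Require Import boolp classical_sets cardinality.
From mathcomp Require Import zify.
Set Implicit Arguments. Unset Strict Implicit. Unset Printing Implicit Defensive.
Import GRing.Theory Num.Theory.
Local Open Scope classical_set_scope.

(* A Delta-system argument.  List each v^p increasingly and collect everything
   about p that does not mention ordinals (n^p, s^p, the table of F^p, and gamma^p,
   rho^p along the enumeration) into a code in a countable type, so that an
   uncountable antichain contains uncountably many conditions with the same code.
   Among those, a Delta-system lemma for increasing sequences of a fixed length k
   gives p and q whose enumerations agree below some m and are disjoint above it;
   as the enumerations increase, this root lies below every other point of v^p, v^q.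
   Such p and q are amalgamated at level n + 1: each gamma gets one more bit, set
   exactly on v^q \ v^p; the old f_i copy that bit when their value is the gamma
   of a point of v^q \ v^p; and a pair alpha < beta lying on different sides gets
   a fresh index whose function is constantly gamma(alpha). *)

Lemma subset_countable T (A B : set T) : A `<=` B -> countable B -> countable A.
Proof. by move=> AB; apply: sub_countable; apply: subset_card_le. Qed.

Lemma countable_setU T (A B : set T) :
  countable A -> countable B -> countable (A `|` B).
Proof.
move=> cA cB; have -> : A `|` B = \bigcup_(b in [set: bool]) (if b then A else B).
  apply/seteqP; split=> x; first by case=> ?; [exists true | exists false].
  by case=> -[] _ ?; [left | right].
by apply: bigcup_countable => // -[].
Qed.

Lemma uncountable_setD T (A B : set T) :
  ~ countable A -> countable B -> exists2 x, A x & ~ B x.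
Proof.
move=> ncA cB; apply: contrapT => nAB; apply: ncA; apply: subset_countable cB => x Ax.
by apply: contrapT => nBx; apply: nAB; exists x.
Qed.

Lemma uncountable_fiber I T (D : set I) (A : set T) (R : I -> T -> Prop) :
  countable D -> ~ countable A -> (forall x, A x -> exists2 i, D i & R i x) ->
  exists2 i, D i & ~ countable [set x | A x /\ R i x].
Proof.
move=> cD ncA AR; apply: contrapT => nfib; apply: ncA.
apply: (@subset_countable _ _ (\bigcup_(i in D) [set x | A x /\ R i x])).
  by move=> x Ax; have [i Di Rix] := AR x Ax; exists i.
by apply: bigcup_countable => // i Di; apply: contrapT => ncF; apply: nfib; exists i.
Qed.

Definition increasing W (lt : W -> W -> Prop) (e : nat -> W) k :=
  forall i j, i < j -> j < k -> lt (e i) (e j).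

Definition enumerates W (lt : W -> W -> Prop) (v : set W) k (e : nat -> W) :=
  increasing lt e k /\ v = e @` `I_k.

Definition delta_pair W k m (e1 e2 : nat -> W) :=
  [/\ m <= k, forall i, i < m -> e1 i = e2 i &
      forall i j, m <= i < k -> m <= j < k -> e1 i <> e2 j].

Section Omega1.
Variables (W : Type) (lt : W -> W -> Prop).
Hypothesis om : is_omega1 lt.

Lemma omega1_irrefl a : ~ lt a a. Proof. by case: om => -[]. Qed.

Lemma omega1_trans a b c : lt a b -> lt b c -> lt a c.
Proof. by case: om => -[_ + _ _] _; apply. Qed.

Lemma omega1_total a b : [\/ lt a b, a = b | lt b a]. Proof. by case: om => -[]. Qed.

Lemma omega1_segment_countable b : countable [set a | lt a b].
Proof. by case: om => _ []. Qed.

Lemma omega1_uncountable : ~ countable [set: W]. Proof. by case: om => _ []. Qed.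

Lemma omega1_unbounded a : exists b, lt a b.
Proof.
have [b _ nb] := uncountable_setD omega1_uncountable
  (countable_setU (omega1_segment_countable a) (countable1 a)).
exists b; case: (omega1_total a b) => // [ab|ba]; exfalso; apply: nb; by [right|left].
Qed.

Lemma increasing_lt e k i j b :
  increasing lt e k -> i <= j -> j < k -> lt (e j) b -> lt (e i) b.
Proof.
move=> ince; rewrite leq_eqVlt => /orP[/eqP-> //|ij] jk.
exact: omega1_trans (ince _ _ ij jk).
Qed.

Lemma delta_system X (B : set X) (e : X -> nat -> W) k :
  ~ countable B -> (forall x, B x -> increasing lt (e x) k) ->
  exists x y, [/\ B x, B y, x <> y & exists m, delta_pair k m (e x) (e y)].
Proof.
elim: k B e => [|k IH] B e ncB ince.
  have [x Bx _] := uncountable_setD ncB (countable0 X).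
  have [y By yx] := uncountable_setD ncB (countable1 x).
  by exists x, y; split=> //; [move=> xy; apply: yx | exists 0; split=> // i j /andP[]].
have [[a nca]|thin] := pselect (exists a, ~ countable [set x | B x /\ e x 0 = a]).
  have [x [y [[Bx ex] [By ey] xy [m [mk agree apart]]]]] :=
    IH _ (fun x i => e x i.+1) nca (fun x Bx i j => ince x Bx.1 i.+1 j.+1).
  exists x, y; split=> //; exists m.+1; split=> // [[|i] im|[|i] [|j] //].
  - by rewrite ex ey.
  - exact: agree.
  - exact: apart.
(* Now only countably many y start below any given b; take b above all of x. *)
have [x Bx _] := uncountable_setD ncB (countable0 X).
have [b eb] := omega1_unbounded (e x k).
have below i : i <= k -> lt (e x i) b by move=> ik; apply: increasing_lt (ince x Bx) ik _ eb.
have cb : countable [set y | B y /\ lt (e y 0) b].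
  apply: contrapT => nc.
  have [a _ nca] := uncountable_fiber (R := fun a y => e y 0 = a)
    (omega1_segment_countable b) nc (fun y yb => ex_intro2 _ _ (e y 0) yb.2 erefl).
  by apply: thin; exists a; apply: contra_not nca; apply: subset_countable => y [[]].
have [y By nyb] := uncountable_setD ncB cb.
have {}nyb : ~ lt (e y 0) b by move=> yb; apply: nyb.
exists x, y; split=> //; first by move=> xy; apply: nyb; rewrite -xy; apply: below.
exists 0; split=> // i j /andP[_ ik] /andP[_ jk] eij; apply: nyb.
by apply: increasing_lt (ince y By) (leq0n j) jk _; rewrite -eij; apply: below.
Qed.

Lemma finite_enumerates (v : set W) : finite_set v -> exists k e, enumerates lt v k e.
Proof.
have [w _ _] := uncountable_setD omega1_uncountable (countable0 W).
move=> /(@finite_seqP {classic W})[s ->].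
pose le (a b : {classic W}) := `[< lt a b \/ a = b >].
have le_trans : transitive le.
  move=> b a c /asboolP[ab|<-] /asboolP[bc|<-]; apply/asboolP; last by right.
  - by left; apply: omega1_trans ab bc.
  - by left.
  - by left.
have le_total : total le.
  move=> a b; case: (omega1_total a b) => [ab|->|ba]; apply/orP.
  - by left; apply/asboolP; left.
  - by left; apply/asboolP; right.
  - by right; apply/asboolP; left.
pose t := sort le (undup s).
have t_uniq : uniq t by rewrite sort_uniq undup_uniq.
exists (size t), (nth w t); split.
  move=> i j ij jt; have it := ltn_trans ij jt.
  have /asboolP[//|eij] := sorted_ltn_nth le_trans w (sort_sorted le_total _) i j it jt ij.
  by move/eqP: eij; rewrite nth_uniq // ltn_eqF.
apply/seteqP; split=> a /=.
  have : (a \in s) = (a \in t) by rewrite (mem_sort le) mem_undup.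
  by move=> -> /(nthP (w : {classic W}))[i it <-]; exists i.
by move=> [i it <-]; rewrite -mem_undup -(mem_sort le) mem_nth.
Qed.

End Omega1.

Lemma take_eq_first_split n (x y : n.-tuple bool) j :
  x <> y -> (take j x == take j y) = (j < first_split x y).
Proof.
move=> xy; rewrite /first_split; set P := (X in find X _).
have has_split : has P (iota 0 n.+1).
  apply/hasP; exists n; first by rewrite mem_iota add0n ltnSn.
  by rewrite /P !take_oversize ?size_tuple //; apply/eqP => /val_inj.
have fs_lt : find P (iota 0 n.+1) < n.+1 by move: has_split; rewrite has_find size_iota.
have [jfs|fsj] := ltnP j (find P (iota 0 n.+1)).
  by have /negbT := before_find 0 jfs; rewrite nth_iota ?(ltn_trans jfs) // add0n /P /= negbK => ->.
apply/negbTE; have := nth_find 0 has_split; rewrite nth_iota // add0n /P /=.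
by apply: contra => /eqP jxy; apply/eqP; rewrite -(take_takel x fsj) -(take_takel y fsj) jxy.
Qed.

Lemma lipschitz1P n (g : n.-tuple bool -> n.-tuple bool) :
  lipschitz1 g <->
  forall (x y : n.-tuple bool) j, take j x = take j y -> take j (g x) = take j (g y).
Proof.
have le_split x y : x <> y -> g x <> g y ->
    (cdist (g x) (g y) <= cdist x y)%R = (first_split x y <= first_split (g x) (g y)).
  move=> /eqP/negPf xy /eqP/negPf gxy.
  by rewrite /cdist xy gxy -!exprVn ler_iXn2l // ?invr_gt0 ?invf_lt1 ?ltr1n.
split=> [lip x y j xyj | pre x y].
  have [->//|/eqP gxy] := eqVneq (g x) (g y).
  have xy : x <> y by move=> exy; apply: gxy; rewrite exy.
  apply/eqP; rewrite take_eq_first_split //.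
  apply: (@leq_trans (first_split x y)); first by rewrite -take_eq_first_split //; apply/eqP.
  by rewrite -le_split //; apply: lip.
have [->|xy] := eqVneq x y; first by rewrite /cdist !eqxx.
have [gxy|gxy] := eqVneq (g x) (g y).
  by rewrite /cdist gxy eqxx (negPf xy) invr_ge0 exprn_ge0.
rewrite le_split; try exact/eqP; rewrite leqNgt; apply/negP => split_lt.
set j := first_split (g x) (g y) in split_lt.
suff : take j (g x) == take j (g y) by rewrite take_eq_first_split ?ltnn //; apply/eqP.
by apply/eqP; apply: pre; apply/eqP; rewrite take_eq_first_split //; apply/eqP.
Qed.

Lemma lipschitz1_cst n (c : n.-tuple bool) : lipschitz1 (fun=> c).
Proof. exact/lipschitz1P. Qed.

Section TupleRcons.
Variables (T : Type) (n : nat).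

Definition trcons (x : n.-tuple T) (b : T) : n.+1.-tuple T := [tuple of rcons x b].
Definition tbelast (x : n.+1.-tuple T) : n.-tuple T := [tuple of belast (thead x) (behead x)].
Definition tlast (x : n.+1.-tuple T) : T := last (thead x) (behead x).

Lemma rcons_tbelast x : rcons (tbelast x) (tlast x) = x :> seq T.
Proof. by case/tupleP: x => h t; rewrite /= theadE -lastI. Qed.

Lemma take_trcons x b : take n (trcons x b) = x.
Proof. by rewrite /= -cats1 take_size_cat ?size_tuple. Qed.

Lemma val_tbelast x : val (tbelast x) = take n x.
Proof. by rewrite -[in RHS](rcons_tbelast x) -cats1 take_size_cat ?size_tuple. Qed.

Lemma tbelast_trcons x b : tbelast (trcons x b) = x.
Proof. by apply: val_inj; rewrite val_tbelast take_trcons. Qed.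

Lemma tlast_trcons x b : tlast (trcons x b) = b.
Proof. by have /rcons_inj[] := rcons_tbelast (trcons x b). Qed.

Lemma trcons_inj x y b c : trcons x b = trcons y c -> x = y /\ b = c.
Proof. by move/(congr1 val)/rcons_inj => [/val_inj]. Qed.

End TupleRcons.

Arguments trcons_inj {T n x y b c} _.

Lemma lipschitz1_trcons n (g : n.-tuple bool -> n.-tuple bool) (c : n.+1.-tuple bool -> bool) :
  lipschitz1 g -> lipschitz1 (fun x => trcons (g (tbelast x)) (c x)).
Proof.
move=> /lipschitz1P gP; apply/lipschitz1P => x y j xyj /=.
have [jn|nj] := leqP j n.
  rewrite -!cats1 !takel_cat ?size_tuple //; apply: gP.
  by rewrite !val_tbelast !take_takel.
by move: xyj; rewrite !take_oversize ?size_tuple // => /val_inj ->.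
Qed.

Definition index_of W (e : nat -> W) k a := find (fun i => `[< e i = a >]) (iota 0 k).

Lemma index_ofP W (e : nat -> W) k a :
  (e @` `I_k) a -> index_of e k a < k /\ e (index_of e k a) = a.
Proof.
move=> [i ik eia].
have has_a : has (fun i => `[< e i = a >]) (iota 0 k).
  by apply/hasP; exists i; [rewrite mem_iota | apply/asboolP].
have ak : index_of e k a < k by move: has_a; rewrite has_find size_iota.
by split=> //; have /asboolP := nth_find 0 has_a; rewrite nth_iota.
Qed.

Section Amalgamation.
Variables (W : Type) (lt : W -> W -> Prop).
Hypothesis om : is_omega1 lt.
Variables (n N k m : nat) (S : set nat) (vp vq : set W) (e1 e2 : nat -> W).
Variables (fp fq : nat -> n.-tuple bool -> n.-tuple bool) (gp gq : W -> n.-tuple bool).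
Variables (rp rq : W -> W -> nat).
Hypotheses (Pp : in_P lt (Cond S vp fp gp rp)) (Pq : in_P lt (Cond S vq fq gq rq)).
Hypothesis S_lt_N : forall i, S i -> i < N.
Hypothesis fpq : forall i, S i -> fp i =1 fq i.
Hypotheses (e1_incr : increasing lt e1 k) (vpE : vp = e1 @` `I_k).
Hypotheses (e2_incr : increasing lt e2 k) (vqE : vq = e2 @` `I_k).
Hypothesis gpq : forall i, i < k -> gp (e1 i) = gq (e2 i).
Hypothesis rpq : forall i j, i < k -> j < k -> rp (e1 i) (e1 j) = rq (e2 i) (e2 j).
Hypothesis root : delta_pair k m e1 e2.

Lemma root_index a : vp a -> vq a -> exists2 i, i < m & e1 i = a /\ e2 i = a.
Proof.
case: root => _ agree apart; rewrite vpE vqE => -[i ik <-] [j jk e2j].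
have [im|mi] := ltnP i m; first by exists i; rewrite -?agree.
have [jm|mj] := ltnP j m; first by exists j; rewrite // (agree j jm) e2j.
by exfalso; apply: (apart i j); rewrite ?mi ?ik ?mj ?jk ?e2j.
Qed.

Lemma root_below a b : vp a -> vq a -> vp b \/ vq b -> ~ (vp b /\ vq b) -> lt a b.
Proof.
move=> pa qa pqb nb; have [i im [e1i e2i]] := root_index pa qa.
case: root => mk agree _.
have vp_e1 j : j < k -> vp (e1 j) by rewrite vpE; exists j.
have vq_e2 j : j < k -> vq (e2 j) by rewrite vqE; exists j.
case: pqb; [rewrite vpE | rewrite vqE] => -[j jk ejb]; subst b;
  have [jm|mj] := ltnP j m.
- by case: nb; split; [apply: vp_e1 | rewrite agree //; apply: vq_e2].
- by rewrite -e1i; apply: e1_incr (leq_trans im mj) jk.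
- by case: nb; split; [rewrite -agree //; apply: vp_e1 | apply: vq_e2].
- by rewrite -e2i; apply: e2_incr (leq_trans im mj) jk.
Qed.

Lemma root_closed a b : vp b -> vq b -> (vp a \/ vq a) -> lt a b -> vp a /\ vq a.
Proof.
move=> pb qb ra ab; apply: contrapT => na.
exact: omega1_irrefl om _ (omega1_trans om ab (root_below pb qb ra na)).
Qed.

Lemma root_gamma a : vp a -> vq a -> gp a = gq a.
Proof.
move=> pa qa; have [i im [<- e2i]] := root_index pa qa; case: root => mk _ _.
by rewrite gpq ?e2i //; apply: leq_trans im mk.
Qed.

Lemma root_rho a b : vp a -> vq a -> vp b -> vq b -> rp a b = rq a b.
Proof.
move=> pa qa pb qb; case: root => mk _ _.
have [i im [e1i e2i]] := root_index pa qa; have [j jm [e1j e2j]] := root_index pb qb.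
rewrite -[in LHS]e1i -[in LHS]e1j -[in RHS]e2i -[in RHS]e2j.
by rewrite rpq //; apply: leq_trans mk; [apply: im | apply: jm].
Qed.

(* The indices N + i and N + k + i (i < k) are fresh; they name the constant
   functions with values amalg_gamma (e1 i) and amalg_gamma (e2 i). *)
Definition decode i := if i < N + k then e1 (i - N) else e2 (i - N - k).

Definition q_only (y : n.-tuple bool) : bool := `[< exists2 a, (vq `\` vp) a & gq a = y >].

Definition amalg_gamma a : n.+1.-tuple bool :=
  if `[< vp a >] then trcons (gp a) false else trcons (gq a) true.

Definition amalg_f i (x : n.+1.-tuple bool) : n.+1.-tuple bool :=
  if i < N then trcons (fp i (tbelast x)) (tlast x && q_only (fp i (tbelast x)))
  else amalg_gamma (decode i).

Definition amalg_rho a b :=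
  if `[< vp a /\ vp b >] then rp a b
  else if `[< vq a /\ vq b >] then rq a b
  else if `[< vp a >] then N + index_of e1 k a else N + k + index_of e2 k a.

Definition amalgam : cond W :=
  Cond (S `|` [set i | N <= i < N + k + k]) (vp `|` vq) amalg_f amalg_gamma amalg_rho.

Lemma amalg_gamma_p a : vp a -> amalg_gamma a = trcons (gp a) false.
Proof. by move=> pa; rewrite /amalg_gamma asboolT. Qed.

Lemma amalg_gamma_q a : ~ vp a -> amalg_gamma a = trcons (gq a) true.
Proof. by move=> npa; rewrite /amalg_gamma asboolF. Qed.

Lemma amalg_rho_cases a b : (vp `|` vq) a -> (vp `|` vq) b -> lt a b ->
  [\/ [/\ vp a, vp b, amalg_rho a b = rp a b & S (rp a b)],
      [/\ vq a, vq b, ~ vp b, amalg_rho a b = rq a b & S (rq a b)] |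
      [/\ N <= amalg_rho a b, amalg_rho a b < N + k + k & decode (amalg_rho a b) = a]].
Proof.
move=> ra rb ab; have [_ [rp_S _ _ _]] := Pp; have [_ [rq_S _ _ _]] := Pq.
rewrite /amalg_rho; have [[pa pb]|npab] := pselect (vp a /\ vp b).
  by rewrite asboolT //; constructor 1; split=> //; apply: rp_S.
rewrite asboolF //; have [[qa qb]|nqab] := pselect (vq a /\ vq b).
  rewrite asboolT //; constructor 2; split=> //; last exact: rq_S.
  by move=> pb; apply: npab; split=> //; case: (root_closed pb qb ra ab).
rewrite asboolF //; constructor 3; have [pa|npa] := pselect (vp a).
  rewrite asboolT //; move: pa; rewrite vpE => /(@index_ofP _ e1 k a)[ik e1a].
  by rewrite /decode ltn_add2l ik addKn e1a; split=> //; lia.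
have qa : vq a by case: ra.
rewrite asboolF //; move: qa; rewrite vqE => /(@index_ofP _ e2 k a)[ik e2a].
have -> : decode (N + k + index_of e2 k a) = a.
  rewrite /decode ltnNge leq_addr /=.
  by have -> : N + k + index_of e2 k a - N - k = index_of e2 k a by lia.
by split=> //; lia.
Qed.

Lemma amalg_rho_neq a a' b : (vp `|` vq) a -> (vp `|` vq) a' -> (vp `|` vq) b ->
  lt a a' -> lt a' b -> amalg_rho a b <> amalg_rho a' b.
Proof.
move=> ra ra' rb aa' a'b; have ab := omega1_trans om aa' a'b.
have [_ [_ rp_neq _ _]] := Pp; have [_ [_ rq_neq _ _]] := Pq.
have fresh_neq x y : x < N -> N <= y -> x <> y by move=> + + xy; rewrite xy ltnNge => /negP.
case: (amalg_rho_cases ra rb ab) => [[pa pb -> /S_lt_N ?]|[qa qb npb -> /S_lt_N ?]|[? _ da]];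
case: (amalg_rho_cases ra' rb a'b) => [[pa' _ -> /S_lt_N ?]|[qa' _ ? -> /S_lt_N ?]|[? _ da']] //.
- exact: rp_neq.
- exact: fresh_neq.
- exact: rq_neq.
- exact: fresh_neq.
- by move/esym; apply: fresh_neq.
- by move/esym; apply: fresh_neq.
- move=> e; have a_a' : a = a' by rewrite -da e.
  by move: aa'; rewrite a_a'; apply: omega1_irrefl.
Qed.

Lemma amalg_gamma_inj a b : (vp `|` vq) a -> (vp `|` vq) b ->
  amalg_gamma a = amalg_gamma b -> a = b.
Proof.
have [_ [_ _ gp_inj _]] := Pp; have [_ [_ _ gq_inj _]] := Pq.
move=> ra rb; have [pa|npa] := pselect (vp a); have [pb|npb] := pselect (vp b).
- rewrite !amalg_gamma_p // => /trcons_inj[gab _].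
  exact: gp_inj _ _ pa pb gab.
- by rewrite amalg_gamma_p // amalg_gamma_q // => /trcons_inj[_].
- by rewrite amalg_gamma_q // amalg_gamma_p // => /trcons_inj[_].
- rewrite !amalg_gamma_q // => /trcons_inj[gab _].
  by apply: gq_inj _ _ _ _ gab; [case: ra | case: rb].
Qed.

Lemma amalg_coherent a b : (vp `|` vq) a -> (vp `|` vq) b -> lt a b ->
  amalg_gamma a = amalg_f (amalg_rho a b) (amalg_gamma b).
Proof.
have [_ [_ _ _ gp_coh]] := Pp; have [_ [_ _ gq_inj gq_coh]] := Pq.
move=> ra rb ab; rewrite /amalg_f.
case: (amalg_rho_cases ra rb ab) => [[pa pb -> Si]|[qa qb npb -> Si]|[Nr _ ->]].
- by rewrite S_lt_N // !amalg_gamma_p // tbelast_trcons tlast_trcons; congr trcons; apply: gp_coh.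
- rewrite S_lt_N // (amalg_gamma_q npb) tbelast_trcons tlast_trcons /= fpq //.
  have -> : fq (rq a b) (gq b) = gq a by apply/esym/gq_coh.
  have [pa|npa] := pselect (vp a).
    rewrite amalg_gamma_p // root_gamma // /q_only asboolF // => -[a' [qa' npa']].
    by move/(gq_inj _ _ qa' qa) => a'a; apply: npa'; rewrite a'a.
  by rewrite amalg_gamma_q // /q_only asboolT //; exists a.
- by rewrite ltnNge Nr.
Qed.

Lemma amalgam_in_P : in_P lt amalgam.
Proof.
have [[_ vp_fin fp_lip] _] := Pp; have [[_ vq_fin _] _] := Pq.
split; split=> /=.
- apply: (@sub_finite_set _ _ `I_(N + k + k)); last exact: finite_II.
  by move=> i [/S_lt_N|/andP[_]] /=; lia.
- by rewrite finite_setU.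
- move=> i [Si|/andP[Ni _]]; rewrite /amalg_f.
    by rewrite S_lt_N //; apply: lipschitz1_trcons; apply: fp_lip.
  by rewrite ltnNge Ni; apply: lipschitz1_cst.
- move=> a b ra rb ab.
  case: (amalg_rho_cases ra rb ab) => [[_ _ -> ?]|[_ _ _ -> ?]|[? ? _]]; [by left | by left |].
  by right; apply/andP.
- exact: amalg_rho_neq.
- exact: amalg_gamma_inj.
- exact: amalg_coherent.
Qed.

Lemma P_le_amalgam_l : P_le lt (Cond S vp fp gp rp) amalgam.
Proof.
split; first by split=> [|i|a] /=; [apply: leqnSn | left | left].
split=> /=.
- move=> i Si x x' xx'; rewrite /amalg_f S_lt_N //= take_trcons.
  by have -> : tbelast x = x' by apply: val_inj; rewrite val_tbelast -xx'.
- by move=> a pa; rewrite amalg_gamma_p // take_trcons.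
- by move=> a b pa pb _; rewrite /amalg_rho asboolT.
Qed.

Lemma P_le_amalgam_r : P_le lt (Cond S vq fq gq rq) amalgam.
Proof.
split; first by split=> [|i|a] /=; [apply: leqnSn | left | right].
split=> /=.
- move=> i Si x x' xx'; rewrite /amalg_f S_lt_N //= take_trcons fpq //.
  by have -> : tbelast x = x' by apply: val_inj; rewrite val_tbelast -xx'.
- move=> a qa; have [pa|npa] := pselect (vp a).
    by rewrite amalg_gamma_p // take_trcons root_gamma.
  by rewrite amalg_gamma_q // take_trcons.
- move=> a b qa qb _; rewrite /amalg_rho; have [[pa pb]|npab] := pselect (vp a /\ vp b).
    by rewrite asboolT // root_rho.
  by rewrite asboolF // asboolT.
Qed.

Lemma amalgam_compatible : P_compatible lt (Cond S vp fp gp rp) (Cond S vq fq gq rq).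
Proof.
exists amalgam; split; first exact: amalgam_in_P.
by split; [apply: P_le_amalgam_l | apply: P_le_amalgam_r].
Qed.

End Amalgamation.

Definition code :=
  (nat * seq nat * seq (seq (seq bool)) * nat * seq (seq bool) * seq (seq nat))%type.

Definition coded_by W (lt : W -> W -> Prop) (c : code) (p : cond W) (e : nat -> W) :=
  let: (n, sl, G, k, gl, rl) := c in
  [/\ cn p = n, cs p = [set` sl], enumerates lt (cv p) k e &
      [/\ G = [seq [seq val (cf p i x) | x <- enum {: (cn p).-tuple bool}] | i <- sl],
          gl = mkseq (fun i => val (cgamma p (e i))) k &
          rl = mkseq (fun i => mkseq (fun j => crho p (e i) (e j)) k) k]].

Lemma coded_exists W (lt : W -> W -> Prop) p :
  is_omega1 lt -> in_P lt p -> exists c e, coded_by lt c p e.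
Proof.
move=> om [[/(@finite_seqP nat)[sl csE] v_fin _] _].
have [k [e ev]] := finite_enumerates om v_fin.
by eexists (cn p, sl, _, k, _, _), e.
Qed.

Lemma coded_compatible W (lt : W -> W -> Prop) n sl G k gl rl p q e1 e2 m :
  is_omega1 lt -> in_P lt p -> in_P lt q ->
  coded_by lt (n, sl, G, k, gl, rl) p e1 -> coded_by lt (n, sl, G, k, gl, rl) q e2 ->
  delta_pair k m e1 e2 -> P_compatible lt p q.
Proof.
case: p q => np sp vp fp gp rp [nq sq vq fq gq rq] om Pp Pq.
move=> [/= enp esp [inc1 vpE] [Gp glp rlp]] [/= enq esq [inc2 vqE] [Gq glq rlq]] root.
subst np nq sp sq G gl rl; move: Gq glq rlq => /eq_in_map fE /eq_in_map gE /eq_in_map rE.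
have fpq (i : nat) : i \in sl -> fp i =1 fq i.
  move=> iS x; apply: val_inj.
  by have /eq_in_map := fE i iS; apply; rewrite mem_enum.
have gpq i : i < k -> gp (e1 i) = gq (e2 i).
  by move=> ik; apply: val_inj; apply: gE; rewrite mem_iota.
have rpq i j : i < k -> j < k -> rp (e1 i) (e1 j) = rq (e2 i) (e2 j).
  move=> ik jk; have := rE i; rewrite mem_iota add0n ik => /(_ isT)/eq_in_map.
  by apply; rewrite mem_iota.
have S_lt_N (i : nat) : i \in sl -> i < \max_(j <- sl) j.+1.
  by move=> iS; apply: leq_bigmax_seq iS _.
exact: (amalgam_compatible om Pp Pq S_lt_N fpq inc1 vpE inc2 vqE gpq rpq root).
Qed.

Theorem lemma3p2 (W : Type) (lt : W -> W -> Prop) :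
  is_omega1 lt -> P_ccc lt.
Proof.
move=> om A [inA antiA]; apply: contrapT => ncA.
have [w _ _] := uncountable_setD (omega1_uncountable om) (countable0 W).
have /choice[ce ceP] : forall p, exists ce : code * (nat -> W), A p -> coded_by lt ce.1 p ce.2.
  move=> p; have [Ap|nAp] := pselect (A p).
    by have [c [e pce]] := coded_exists om (inA p Ap); exists (c, e).
  by exists ((0, [::], [::], 0, [::], [::]), fun=> w).
have [[[[[[n sl] G] k] gl] rl] _ ncB] := uncountable_fiber (R := fun c p => (ce p).1 = c)
  (countableP [set: code]) ncA (fun p _ => ex_intro2 _ _ (ce p).1 I erefl).
set c := (n, sl, G, k, gl, rl) in ncB.
have cB p : A p /\ (ce p).1 = c -> coded_by lt c p (ce p).2 by move=> [Ap <-]; apply: ceP.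
have incB p : A p /\ (ce p).1 = c -> increasing lt (ce p).2 k by move=> /cB[_ _ []].
have [p [q [Bp Bq pq [m root]]]] := delta_system om ncB incB.
apply: (antiA p q Bp.1 Bq.1 pq).
exact: coded_compatible om (inA p Bp.1) (inA q Bq.1) (cB p Bp) (cB q Bq) root.
Qed.
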